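(* Let $D$ be a link diagram and $\mathcal{R}$ a set of regions of $D$. If the cardinality of $\mathcal{R}$ is even, then region freeze crossing changes about $\mathcal{R}$ and region crossing changes about $\mathcal{R}$ have the same effect on $D$ (produce the same diagram). If the cardinality of $\mathcal{R}$ is odd, then the diagram obtained from $D$ by region freeze crossing changes about $\mathcal{R}$ is the mirror image of the diagram obtained from $D$ by region crossing changes about $\mathcal{R}$.
   Context: A link diagram is a regular projection of a link into the plane with over/under information at each crossing. Regions are the connected components of the complement of the projection in the plane; a crossing touches a region $R$ if it lies on the boundary of $R$. A region crossing change at $R$ changes every crossing touching $R$ (each once). A region freeze crossing change at $R$ changes every crossing of the diagram that does not touch $R$, and leaves the crossings touching $R$ unchanged. For a set $\mathcal{R}$ of mutually distinct regions, region (freeze) crossing changes about $\mathcal{R}$ means applying the region (freeze) crossing change at each region of $\mathcal{R}$ once, in any order. The mirror image of a diagram here means the diagram with the same projection and every crossing changed. *)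

From mathcomp Require Import all_boot.
Set Implicit Arguments. Unset Strict Implicit. Unset Printing Implicit Defensive.

(* A link diagram with crossings of type C and regions of type Rg:
   - [touches c R] : crossing c lies on the boundary of region R
     (this is determined by the underlying projection);
   - [over c] : the over/under information at crossing c (which strand
     is over, encoded as a boolean). *)
Record diagram (C Rg : finType) := Diagram {
  touches : C -> Rg -> bool;
  over : {ffun C -> bool}
}.

Section Ops.
Variables (C Rg : finType).

Definition change_crossings (P : C -> bool) (D : diagram C Rg) : diagram C Rg :=
  Diagram (touches D) [ffun c => if P c then ~~ over D c else over D c].

Definition rcc (R : Rg) (D : diagram C Rg) : diagram C Rg :=
  change_crossings (fun c => touches D c R) D.

Definition rfcc (R : Rg) (D : diagram C Rg) : diagram C Rg :=
  change_crossings (fun c => ~~ touches D c R) D.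

Definition rcc_about (rs : seq Rg) (D : diagram C Rg) : diagram C Rg :=
  foldr rcc D rs.
Definition rfcc_about (rs : seq Rg) (D : diagram C Rg) : diagram C Rg :=
  foldr rfcc D rs.

Definition mirror (D : diagram C Rg) : diagram C Rg :=
  change_crossings (fun _ => true) D.
End Ops.

(* A crossing c is changed by the region crossing changes about rs once for each
   region of rs that c touches, and by the freeze changes once for each region it
   does not touch.  These two counts add up to the size of rs, so their parities
   agree exactly when the size of rs is even; otherwise they differ at every
   crossing, which is the mirror image. *)
From Pilot Require Import Defs.
From mathcomp Require Import all_boot.

Set Implicit Arguments. Unset Strict Implicit. Unset Printing Implicit Defensive.

Section CrossingChanges.
Variables (C Rg : finType).
Implicit Types (D : diagram C Rg) (rs : seq Rg) (P : C -> bool).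

Lemma diagram_ext D1 D2 :
  touches D1 = touches D2 -> Defs.over D1 =1 Defs.over D2 -> D1 = D2.
Proof. by case: D1 D2 => t1 o1 [t2 o2] /= -> /ffunP ->. Qed.

Lemma touches_change_crossings P D : touches (change_crossings P D) = touches D.
Proof. by []. Qed.

Lemma over_change_crossings P D c :
  Defs.over (change_crossings P D) c = Defs.over D c (+) P c.
Proof. by rewrite ffunE; case: (P c); rewrite ?addbT ?addbF. Qed.

Lemma change_crossings_pred0 D : change_crossings (fun _ => false) D = D.
Proof. by apply: diagram_ext => // c; rewrite over_change_crossings addbF. Qed.

Lemma touches_rcc_about rs D : touches (rcc_about rs D) = touches D.
Proof. by elim: rs => //= r rs IH; rewrite touches_change_crossings. Qed.

Lemma touches_rfcc_about rs D : touches (rfcc_about rs D) = touches D.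
Proof. by elim: rs => //= r rs IH; rewrite touches_change_crossings. Qed.

Lemma over_rcc_about rs D c :
  Defs.over (rcc_about rs D) c = Defs.over D c (+) odd (count (touches D c) rs).
Proof.
elim: rs => /= [|r rs IH]; first by rewrite addbF.
by rewrite over_change_crossings IH touches_rcc_about oddD oddb addbA addbAC.
Qed.

Lemma over_rfcc_about rs D c :
  Defs.over (rfcc_about rs D) c =
  Defs.over D c (+) odd (count (predC (touches D c)) rs).
Proof.
elim: rs => /= [|r rs IH]; first by rewrite addbF.
by rewrite over_change_crossings IH touches_rfcc_about oddD oddb addbA addbAC.
Qed.

Lemma odd_count_predC (T : Type) (a : pred T) (s : seq T) :
  odd (count (predC a) s) = odd (size s) (+) odd (count a s).
Proof. by rewrite -(count_predC a s) oddD addbAC addbb. Qed.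

Lemma rfcc_aboutE rs D :
  rfcc_about rs D = change_crossings (fun _ => odd (size rs)) (rcc_about rs D).
Proof.
apply: diagram_ext => [|c]; first by rewrite touches_rfcc_about touches_rcc_about.
rewrite over_change_crossings over_rfcc_about over_rcc_about odd_count_predC.
by rewrite addbA addbAC.
Qed.

End CrossingChanges.

Theorem lemma3p1 (C Rg : finType) (D : diagram C Rg) (rs : seq Rg) :
  uniq rs ->
  (~~ odd (size rs) -> rfcc_about rs D = rcc_about rs D) /\
  (odd (size rs) -> rfcc_about rs D = mirror (rcc_about rs D)).
Proof.
move=> _; rewrite rfcc_aboutE; split=> [/negbTE|] ->; last by [].
exact: change_crossings_pred0.
Qed.
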